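(* An $r$-partite partition $\boldsymbol\lambda=(\lambda^0\mid\lambda^1\mid\cdots\mid\lambda^{r-1})$ of size $n$ is the cycle type of an absolute square in $G(r,1,n)$ (an element of the form $\pi\overline{\pi}$ with $\pi\in G(r,1,n)$) if and only if: (1) each even part of $\lambda^0$ has even multiplicity; (2) $\lambda^t=\lambda^{r-t}$ for all $1\le t<r/2$; and (3) when $r$ is even, each part of $\lambda^{r/2}$ has even multiplicity.
   Context: $G(r,1,n)=\{(z_1,\dots,z_n;\sigma):z_i\in\mathbb{Z}_r,\sigma\in S_n\}$ with product $(z;\sigma)(z';\sigma')=(z_1+z'_{\sigma^{-1}(1)},\dots,z_n+z'_{\sigma^{-1}(n)};\sigma\sigma')$. The bar operation is $\overline{(z_1,\dots,z_n;\sigma)}=(-z_1,\dots,-z_n;\sigma)$. The color of a cycle $(u_1,\dots,u_\ell)$ of $\sigma$ is $z_{u_1}+\cdots+z_{u_\ell}\in\mathbb{Z}_r$; the cycle type of $(z;\sigma)$ is $(\lambda^0\mid\cdots\mid\lambda^{r-1})$ where $\lambda^j$ is the partition of the lengths of cycles of color $j$. *)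

From HB Require Import structures.
From mathcomp Require Import all_boot all_order all_algebra all_fingroup.
Set Implicit Arguments. Unset Strict Implicit. Unset Printing Implicit Defensive.
Import GRing.Theory.
Local Open Scope ring_scope.

(* Z_r, for r > 0, as 'I_r (written 'I_(r.-1.+1) to get its Zmodule structure). *)
Definition Zr (r : nat) := 'I_(r.-1.+1).

Definition Grn (r n : nat) := ({ffun 'I_n -> Zr r} * {perm 'I_n})%type.

(* (z;s)(z';s') = (z_i + z'_{s^{-1} i} ; s o s').
   In mathcomp, (s' * s)%g x = s (s' x), i.e. it is s o s'. *)
Definition gmul (r n : nat) (x y : Grn r n) : Grn r n :=
  ([ffun i => x.1 i + y.1 ((x.2)^-1%g i)], (y.2 * x.2)%g).

Definition gbar (r n : nat) (x : Grn r n) : Grn r n :=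
  ([ffun i => - x.1 i], x.2).

Definition cycle_color (r n : nat) (x : Grn r n) (C : {set 'I_n}) : nat :=
  nat_of_ord (\sum_(i in C) x.1 i).

Definition cycle_type (r n : nat) (x : Grn r n) : seq (seq nat) :=
  [seq sort geq [seq #|C| | C : {set 'I_n} <- enum (porbits x.2) & (cycle_color x C == j)%N]
  | j <- iota 0 r].

Definition is_partition (l : seq nat) : bool :=
  sorted geq l && all (fun k => 0 < k)%N l.

Definition rpartition (r n : nat) (lam : seq (seq nat)) : bool :=
  [&& size lam == r, all is_partition lam & sumn (map sumn lam) == n].

(* Write pi = (z; s). Then pi * bar pi = (w; s * s) with w_i = z_i - z_(s^-1 i), so a
   cycle C of s * s has colour sum_C z - sum_(s C) z. An odd cycle of s is a single
   cycle of s * s, of colour 0; an even cycle of s of length 2k splits into two cycles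
   C, s C of length k and opposite colours. Thus C |-> s C is an involution on the cycles
   of pi * bar pi sending (length, colour) (k, j) to (k, -j), whose fixed points have odd
   length and colour 0; this gives the three conditions. Conversely, under the conditions
   the prescribed cycles group into such orbits, and each orbit is realised by one cycle
   of s carrying its whole colour on a single point. *)

From HB Require Import structures.
From mathcomp Require Import all_boot all_order all_algebra all_fingroup.
From mathcomp Require Import zify.
Set Implicit Arguments. Unset Strict Implicit. Unset Printing Implicit Defensive.
Import Order.TTheory GRing.Theory.

Lemma odd_card_fixfree_involution (T : finType) (g : T -> T) (A : {set T}) :
  {in A, forall x, g x \in A} -> {in A, forall x, g (g x) = x} ->
  {in A, forall x, g x != x} -> ~~ odd #|A|.
Proof.
move: {2}#|A| (leqnn #|A|) => m; elim: m A => [|m IH] A.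
  by rewrite leqn0 => /eqP ->.
move=> leAm gA gK g_fixfree; have [->|[x xA]] := set_0Vmem A; first by rewrite cards0.
pose A' := A :\ x :\ g x.
have gxAx : g x \in A :\ x by rewrite !inE (g_fixfree x xA) (gA x xA).
have cardA : #|A| = #|A'|.+2 by rewrite (cardsD1 x) xA (cardsD1 (g x)) gxAx.
have A'A : {subset A' <= A} by move=> y /setD1P[_ /setD1P[]].
rewrite cardA /= negbK; apply: IH.
- by move: leAm; rewrite cardA ltnS => /ltnW.
- move=> y yA'; move: (yA'); rewrite !inE => /and3P[ygx yx yA].
  rewrite gA // andbT; apply/andP; split.
    by apply: contra yx => /eqP gygx; rewrite -(gK y yA) gygx gK.
  by apply: contra ygx => /eqP <-; rewrite gK.
- by move=> y /A'A; apply: gK.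
- by move=> y /A'A; apply: g_fixfree.
Qed.

Section PorbitSums.
Variables (T : finType) (p : {perm T}).

Lemma disjoint_porbit x y :
  porbit p x != porbit p y -> [disjoint porbit p x & porbit p y].
Proof.
move=> neq_xy; apply/pred0P => u /=; apply: contraNF neq_xy => /andP[u_x u_y].
have /eqP <- : porbit p u == porbit p x by rewrite eq_porbit_mem.
by rewrite eq_porbit_mem.
Qed.

Lemma sum_porbit_const (F : {set T} -> nat) x :
  \sum_(y in porbit p x) F (porbit p y) = #|porbit p x| * F (porbit p x).
Proof.
rewrite -sum_nat_const; apply: eq_bigr => y yx.
by congr F; apply/eqP; rewrite eq_porbit_mem.
Qed.

Lemma sum_porbit (F : {set T} -> nat) :
  \sum_x F (porbit p x) = \sum_(C in porbits p) #|C| * F C.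
Proof.
rewrite (partition_big_imset (porbit p)); apply: eq_bigr => _ /imsetP[x _ ->].
rewrite -sum_porbit_const; apply: eq_bigl => y.
by rewrite eq_porbit_mem.
Qed.

End PorbitSums.

Section PermSquare.
Variables (T : finType) (s : {perm T}).
Local Notation t := (s * s)%g.

Lemma sqr_permX i : (t ^+ i)%g = (s ^+ i.*2)%g.
Proof. by elim: i => [|i IH]; rewrite ?expg0 // expgS IH doubleS !expgS mulgA. Qed.

Lemma sqr_permXC i x : s ((t ^+ i)%g x) = (t ^+ i)%g (s x).
Proof. by rewrite -!permM sqr_permX -expgS -expgSr. Qed.

Lemma imset_porbit_sqr x : s @: porbit t x = porbit t (s x).
Proof.
apply/setP=> y; apply/imsetP/porbitP => [[u /porbitP[i ->] ->]|[i ->]].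
  by exists i; rewrite sqr_permXC.
by exists ((t ^+ i)%g x); rewrite ?mem_porbit ?sqr_permXC.
Qed.

Lemma porbit_sqr_perm2 x : porbit t (s (s x)) = porbit t x.
Proof. by rewrite -permM -(expg1 t) porbit_perm. Qed.

Lemma card_porbit_sqr_perm x : #|porbit t (s x)| = #|porbit t x|.
Proof. by rewrite -imset_porbit_sqr card_imset //; apply: perm_inj. Qed.

Lemma porbit_sqrU x : porbit s x = porbit t x :|: porbit t (s x).
Proof.
apply/setP=> y; rewrite inE; apply/porbitP/orP => [[i ->]|[]/porbitP[i ->]].
- rewrite -(odd_double_half i); case: (odd i); [right | left].
    by rewrite add1n expgS permM -sqr_permX mem_porbit.
  by rewrite -sqr_permX mem_porbit.
- by exists i.*2; rewrite sqr_permX.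
- by exists i.*2.+1; rewrite expgS permM sqr_permX.
Qed.

Lemma porbit_sqr_fixed x :
  porbit t (s x) = porbit t x -> porbit s x = porbit t x.
Proof. by move=> fixed; rewrite porbit_sqrU fixed setUid. Qed.

Lemma card_porbit_sqr_moved x :
  porbit t (s x) != porbit t x -> #|porbit s x| = #|porbit t x|.*2.
Proof.
move=> moved; rewrite porbit_sqrU cardsU (disjoint_setI0 _) ?cards0 ?subn0.
  by rewrite card_porbit_sqr_perm addnn.
by rewrite disjoint_sym disjoint_porbit.
Qed.

Lemma odd_card_porbit_sqr x :
  odd #|porbit s x| = (porbit t (s x) == porbit t x).
Proof.
have [fixed | moved] := eqVneq.
  (* If #|porbit s x| = 2m, then t^m x = s^(2m) x = x, so the t-trajectory of x,
     which has #|porbit s x| distinct points, already repeats after m steps. *)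
  have s_t := porbit_sqr_fixed fixed.
  apply: contraT => even_s; have L_eq := even_halfK even_s.
  have m_gt0 : 0 < #|porbit s x|./2.
    by rewrite -double_gt0 L_eq lt0n card_porbit_neq0.
  have tm_x : iter #|porbit s x|./2 t x = x.
    by rewrite -permX sqr_permX L_eq permX iter_porbit.
  have := uniq_traject_porbit t x.
  rewrite -s_t -L_eq -addnn trajectD tm_x cat_uniq => /and3P[_ /hasPn/(_ x)].
  by rewrite -(prednK m_gt0) /= !inE eqxx => /(_ isT).
by rewrite card_porbit_sqr_moved // odd_double.
Qed.

End PermSquare.

(* The (length, colour) pairs of the cycles of pi * bar pi lying on a cycle of pi of
   length p.1 and colour p.2. *)
Definition abs_square_of_cycle {V : zmodType} (p : nat * V) : seq (nat * V) :=
  if odd p.1 then [:: (p.1, 0%R)] else [:: (p.1./2, p.2); (p.1./2, - p.2)%R].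

Section AbsSquareCycles.
Variables (T : finType) (V : zmodType) (z : T -> V) (s : {perm T}).
Local Notation t := (s * s)%g.
Local Open Scope ring_scope.

Definition abs_square_color (C : {set T}) : V := \sum_(i in C) (z i - z (s^-1%g i)).

Local Notation color := abs_square_color.

Definition abs_square_data (C : {set T}) : nat * V := (#|C|, color C).

Local Notation data := abs_square_data.

Definition abs_square_cycles : seq (nat * V) :=
  [seq data C | C : {set T} <- enum (porbits t)].

Lemma abs_square_colorE x :
  color (porbit t x) = \sum_(i in porbit t x) z i - \sum_(i in porbit t (s x)) z i.
Proof.
rewrite /color sumrB; congr (_ - _).
rewrite -[in LHS](porbit_sqr_perm2 s x) -imset_porbit_sqr big_imset /=.
  by apply: eq_bigr => i _; rewrite permK.
by move=> u v _ _; apply: perm_inj.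
Qed.

Lemma abs_square_color_perm x : color (porbit t (s x)) = - color (porbit t x).
Proof. by rewrite !abs_square_colorE porbit_sqr_perm2 opprB. Qed.

Lemma abs_square_color_fixed x :
  porbit t (s x) = porbit t x -> color (porbit t x) = 0.
Proof. by move=> fixed; rewrite abs_square_colorE fixed subrr. Qed.

Lemma abs_square_color_moved x :
  {in porbit s x, forall y, y != x -> z y = 0} ->
  porbit t (s x) != porbit t x -> color (porbit t x) = z x.
Proof.
move=> z_head moved; have t_s := porbit_sqrU s x.
have x_t : x \in porbit t x by apply: porbit_id.
have x_ts : x \notin porbit t (s x).
  by rewrite (disjointFl (disjoint_porbit moved)).
rewrite abs_square_colorE (bigD1 x) //= !big1 ?addr0 ?subr0 // => y.
  move=> y_ts; apply: z_head; first by rewrite t_s in_setU y_ts orbT.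
  by apply: contraTneq y_ts => ->.
by case/andP=> y_t y_x; apply: z_head; rewrite // t_s inE y_t.
Qed.

Lemma count_abs_square_cycles q :
  count_mem q abs_square_cycles = #|[set C in porbits t | data C == q]|.
Proof.
rewrite count_map -sum1_count big_enum_cond /= sum1_card.
by apply: eq_card => C; rewrite !inE.
Qed.

Lemma sum_abs_square_data q :
  (\sum_x (data (porbit t x) == q) = q.1 * count_mem q abs_square_cycles)%N.
Proof.
rewrite (sum_porbit _ (fun C => data C == q)) count_abs_square_cycles mulnC.
rewrite -sum_nat_cond_const big_mkcondr /=.
by apply: eq_bigr => C _; case: eqP => [<-|]; rewrite ?muln1 ?muln0.
Qed.

Lemma abs_square_data_imset C : C \in porbits t ->
  s @: C \in porbits t /\ data (s @: C) = (#|C|, - color C).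
Proof.
case/imsetP=> x _ ->; rewrite imset_porbit_sqr imset_f //.
by rewrite /data card_porbit_sqr_perm abs_square_color_perm.
Qed.

Lemma count_abs_square_cycles_opp k J :
  count_mem (k, J) abs_square_cycles = count_mem (k, - J) abs_square_cycles.
Proof.
suff le_opp q :
    (count_mem q abs_square_cycles <= count_mem (q.1, - q.2) abs_square_cycles)%N.
  by apply/eqP; rewrite eqn_leq le_opp -{2}(opprK J) (le_opp (k, - J)).
rewrite !count_abs_square_cycles -(card_imset _ (imset_inj (@perm_inj _ s))).
apply: subset_leq_card; apply/subsetP => _ /imsetP[C + ->].
rewrite !inE => /andP[C_t /eqP <-].
by have [-> ->] := abs_square_data_imset C_t; rewrite /= eqxx.
Qed.

Lemma odd_count_abs_square_cycles k J : J = - J -> (J != 0) || ~~ odd k ->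
  ~~ odd (count_mem (k, J) abs_square_cycles).
Proof.
move=> J_opp J0_or_even; rewrite count_abs_square_cycles.
apply: (@odd_card_fixfree_involution _ (fun C : {set T} => s @: C)) => C;
  rewrite !inE => /andP[C_t /eqP[card_C color_C]].
- have [sC_t ->] := abs_square_data_imset C_t.
  by rewrite sC_t card_C color_C -J_opp eqxx.
- by case/imsetP: C_t => x _ ->; rewrite !imset_porbit_sqr porbit_sqr_perm2.
- case/imsetP: C_t card_C color_C => x _ -> card_x color_x.
  rewrite imset_porbit_sqr; apply: contraL J0_or_even => /eqP fixed.
  rewrite -color_x abs_square_color_fixed // eqxx -card_x.
  by rewrite -(porbit_sqr_fixed fixed) odd_card_porbit_sqr fixed eqxx.
Qed.

Lemma sum_abs_square_data_porbit x q :
  {in porbit s x, forall y, y != x -> z y = 0} ->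
  (\sum_(y in porbit s x) (data (porbit t y) == q) =
    q.1 * count_mem q (abs_square_of_cycle (#|porbit s x|, z x)))%N.
Proof.
move=> z_head; rewrite /abs_square_of_cycle odd_card_porbit_sqr /=.
have [fixed | moved] := eqVneq.
  rewrite (porbit_sqr_fixed fixed) (sum_porbit_const _ (fun C => data C == q)).
  by rewrite /data abs_square_color_fixed //= addn0; case: eqP => [<-|]; rewrite ?muln0.
rewrite card_porbit_sqr_moved // doubleK porbit_sqrU.
rewrite (eq_bigl [predU porbit t x & porbit t (s x)]) => [|y]; last by rewrite !inE.
rewrite bigU /=; last by rewrite disjoint_sym disjoint_porbit.
rewrite !(sum_porbit_const _ (fun C => data C == q)) /data card_porbit_sqr_perm.
rewrite abs_square_color_perm abs_square_color_moved // addn0 mulnDr.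
by congr (_ + _); case: eqP => [<-|]; rewrite ?muln0.
Qed.

End AbsSquareCycles.

Definition abs_square_type (V : zmodType) (X : seq (nat * V)) : Prop :=
  (forall k J, count_mem (k, J) X = count_mem (k, - J)%R X) /\
  (forall k J, J = (- J)%R -> (J != 0%R) || ~~ odd k -> ~~ odd (count_mem (k, J) X)).

Lemma perm_abs_square_type (V : zmodType) (X Y : seq (nat * V)) :
  perm_eq X Y -> abs_square_type X -> abs_square_type Y.
Proof.
move=> /seq.permP eqXY [X_opp X_odd].
by split=> k J; rewrite -!eqXY; [apply: X_opp | apply: X_odd].
Qed.

Theorem abs_square_cycles_type (T : finType) (V : zmodType) (z : T -> V) (s : {perm T}) :
  abs_square_type (abs_square_cycles z s).
Proof.
by split=> k J; [apply: count_abs_square_cycles_opp | apply: odd_count_abs_square_cycles].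
Qed.

Section CyclesPerm.
Variables (T : finType) (cs : seq (seq T)).
Hypotheses (cs_uniq : uniq (flatten cs)) (cs_cover : forall x, x \in flatten cs).

Definition chunk_index x := find (fun c => x \in c) cs.
Definition chunk x := nth [::] cs (chunk_index x).

Lemma chunk_indexE b x : b < size cs -> x \in nth [::] cs b -> chunk_index x = b.
Proof.
rewrite /chunk_index; elim: cs cs_uniq b => [|c cs' IH] //=.
rewrite cat_uniq => /and3P[_ x_cs' uniq_cs'] [|b] /=; first by move=> _ ->.
rewrite ltnS => lt_b x_b; have x_flat : x \in flatten cs'.
  by apply/flattenP; exists (nth [::] cs' b); rewrite ?mem_nth.
by rewrite (IH uniq_cs' b) //; case: ifP => // x_c; case/hasP: x_cs'; exists x.
Qed.

Lemma chunk_spec x : chunk_index x < size cs /\ x \in chunk x.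
Proof.
have /flattenP[c c_cs x_c] := cs_cover x.
have has_x : has (fun c => x \in c) cs by apply/hasP; exists c.
by rewrite -has_find; split=> //; apply: (nth_find [::] has_x).
Qed.

Lemma mem_chunk x : x \in chunk x. Proof. by case: (chunk_spec x). Qed.

Lemma chunkE x y : y \in chunk x -> chunk y = chunk x.
Proof. by move=> y_x; rewrite /chunk (chunk_indexE (proj1 (chunk_spec x)) y_x). Qed.

Lemma chunk_uniq x : uniq (chunk x).
Proof.
rewrite /chunk; elim: cs cs_uniq (chunk_index x) => [|c cs' IH] /=; first by move=> _ [].
by rewrite cat_uniq => /and3P[uniq_c _ uniq_cs'] [|b] //=; apply: IH.
Qed.

Lemma next_chunk_inj : injective (fun x => next (chunk x) x).
Proof.
move=> x y /= next_xy.
have next_in u : next (chunk u) u \in chunk u by rewrite mem_next mem_chunk.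
have chunk_xy : chunk x = chunk y.
  by rewrite -(chunkE (next_in x)) next_xy (chunkE (next_in y)).
by move: next_xy; rewrite chunk_xy; apply: (can_inj (prev_next (chunk_uniq y))).
Qed.

Definition cycles_perm := perm next_chunk_inj.

Lemma porbit_cycles_perm x : porbit cycles_perm x =i chunk x.
Proof.
have cycle_x : fcycle cycles_perm (chunk x).
  have := cycle_next (chunk_uniq x).
  rewrite (@eq_in_cycle _ (mem (chunk x)) _ (frel cycles_perm)) //.
  by move=> u v u_x _ /=; rewrite permE (chunkE u_x).
move=> y; rewrite -(fconnect_cycle cycle_x (mem_chunk x)).
apply/porbitP/idP => [[i ->]|x_y]; first by rewrite permX fconnect_iter.
by exists (findex cycles_perm x y); rewrite permX iter_findex.
Qed.

Lemma card_porbit_cycles_perm x : #|porbit cycles_perm x| = size (chunk x).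
Proof. by rewrite (eq_card (porbit_cycles_perm x)); apply/card_uniqP/chunk_uniq. Qed.

End CyclesPerm.

Lemma perm_count_mem (T : eqType) (s1 s2 : seq T) :
  (forall x, count_mem x s1 = count_mem x s2) -> perm_eq s1 s2.
Proof. by move=> eq_count; apply/allP => x _; rewrite /= eq_count. Qed.

Lemma count_mem_fst0 (V : eqType) (X : seq (nat * V)) J :
  all (fun q => 0 < q.1) X -> count_mem (0, J) X = 0.
Proof. by move=> /allP X_pos; apply/count_memPn/negP => /X_pos. Qed.

Lemma abs_square_of_cycle_pos (V : zmodType) (p : nat * V) :
  0 < p.1 -> all (fun q => 0 < q.1) (abs_square_of_cycle p).
Proof.
rewrite /abs_square_of_cycle; case: ifP => /= [_ -> // | p_even p_pos].
by rewrite andbT andbb -double_gt0 even_halfK ?p_even.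
Qed.

Lemma abs_square_cycles_pos (T : finType) (V : zmodType) (z : T -> V) (s : {perm T}) :
  all (fun q => 0 < q.1) (abs_square_cycles z s).
Proof.
by apply/allP => _ /mapP[_ /[!mem_enum] /imsetP[x _ ->] ->]; rewrite lt0n card_porbit_neq0.
Qed.

Section BlockRealization.
Variables (V : zmodType) (n : nat) (B : seq (nat * V)).
Hypotheses (B_pos : all (fun p => 0 < p.1) B) (B_sum : sumn (map fst B) = n).

Let cs := reshape (map fst B) (enum 'I_n).

Let flatten_cs : flatten cs = enum 'I_n.
Proof. by rewrite reshapeKr // size_enum_ord B_sum. Qed.

Let shape_cs : shape cs = map fst B.
Proof. by rewrite reshapeKl ?size_enum_ord ?B_sum. Qed.

Let size_cs : size cs = size B.
Proof. by rewrite -(size_map size) -/(shape cs) shape_cs size_map. Qed.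

Let size_nth_cs b : b < size B -> size (nth [::] cs b) = (nth (0, 0%R) B b).1.
Proof.
move=> lt_b; rewrite -(nth_map [::] 0) ?size_cs //.
by rewrite -/(shape cs) shape_cs (nth_map (0, 0%R)).
Qed.

Let cs_uniq : uniq (flatten cs). Proof. by rewrite flatten_cs enum_uniq. Qed.
Let cs_cover x : x \in flatten cs. Proof. by rewrite flatten_cs mem_enum. Qed.

Definition block_perm := cycles_perm cs_uniq cs_cover.

Definition block_colors : {ffun 'I_n -> V} :=
  [ffun x => if x == head x (chunk cs x)
             then (nth (0, 0%R) B (chunk_index cs x)).2 else 0%R].

Lemma sum_abs_square_data_block b q : b < size B ->
  \sum_(y <- nth [::] cs b)
     (abs_square_data block_colors block_perm (porbit (block_perm * block_perm) y) == q) =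
  q.1 * count_mem q (abs_square_of_cycle (nth (0, 0%R) B b)).
Proof.
move=> lt_b; have := size_nth_cs lt_b; have := all_nthP (0, 0%R) B_pos b lt_b.
case def_c: (nth [::] cs b) => [|h c] L_pos size_c; first by rewrite -size_c in L_pos.
have h_b : chunk_index cs h = b.
  by rewrite (chunk_indexE cs_uniq (b := b)) ?size_cs ?def_c ?mem_head.
have chunk_h : chunk cs h = h :: c by rewrite /chunk h_b def_c.
rewrite -chunk_h big_uniq ?chunk_uniq //.
rewrite (eq_bigl (mem (porbit block_perm h))) => [|y]; last first.
  by rewrite /= porbit_cycles_perm.
rewrite sum_abs_square_data_porbit => [|y]; last first.
  rewrite porbit_cycles_perm => y_h; rewrite ffunE (chunkE cs_uniq cs_cover y_h) chunk_h /=.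
  by move/negbTE->.
rewrite card_porbit_cycles_perm chunk_h size_c ffunE chunk_h /= eqxx h_b.
by case: (nth _ B b).
Qed.

Lemma block_realization :
  perm_eq (abs_square_cycles block_colors block_perm) (flatten (map abs_square_of_cycle B)).
Proof.
apply: perm_count_mem => -[k J]; have [->|k_pos] := posnP k.
  rewrite !count_mem_fst0 ?abs_square_cycles_pos //.
  by apply/allP => q /flatten_mapP[p /(allP B_pos) /abs_square_of_cycle_pos /allP]; apply.
apply/eqP; rewrite -(eqn_pmul2l k_pos) -(sum_abs_square_data _ _ (k, J)); apply/eqP.
rewrite count_flatten sumnE !big_map big_distrr -big_enum /= -flatten_cs big_flatten /=.
rewrite (big_nth [::]) [RHS](big_nth (0, 0%R)) size_cs !big_mkord.
by apply: eq_bigr => -[b lt_b] _; apply: sum_abs_square_data_block.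
Qed.

End BlockRealization.

Lemma sum_pick_uniq (I : eqType) (r : seq I) (x : I) (F : I -> nat) :
  uniq r -> \sum_(y <- r) (y == x) * F y = (x \in r) * F x.
Proof.
move=> r_uniq; rewrite (eq_bigr (fun y => if y == x then F y else 0)) => [|y _]; last first.
  by case: eqP; rewrite ?mul1n.
rewrite -big_mkcond /=; have [x_r | x_r] := boolP (x \in r).
  by rewrite -big_filter filter_pred1_uniq // big_seq1 mul1n.
by rewrite mul0n big1_seq // => y /andP[/eqP-> r_x]; case/negP: x_r.
Qed.

Lemma sumn_abs_square_of_cycle (V : zmodType) (p : nat * V) :
  sumn (map fst (abs_square_of_cycle p)) = p.1.
Proof.
rewrite /abs_square_of_cycle; case: ifP => /= [_|p_even]; first exact: addn0.
by rewrite addn0 addnn even_halfK ?p_even.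
Qed.

Section Blocks.
Variable V : finZmodType.
Implicit Types (X : seq (nat * V)) (p q : nat * V).

(* Each (k, J) in X is produced by a cycle of length k and colour 0 when J = 0 and k is
   odd, and otherwise by a cycle of length 2k and colour J, which also produces (k, -J).
   Hence a self-opposite J needs blocks for only half of the copies of (k, J), and of two
   opposite colours J, -J only the one of smaller rank gets blocks. *)
Definition odd_uncolored q := (q.2 == 0%R) && odd q.1.

Definition cycle_block q := if odd_uncolored q then q else (q.1.*2, q.2).

Definition block_mult X q :=
  if q.2 == (- q.2)%R then (if odd_uncolored q then count_mem q X else (count_mem q X)./2)
  else if enum_rank q.2 < enum_rank (- q.2)%R then count_mem q X else 0.

Definition blocks X := flatten [seq nseq (block_mult X q) (cycle_block q) | q <- undup X].

Lemma count_abs_square_of_block p q :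
  count_mem q (abs_square_of_cycle (cycle_block p)) =
  (p == q) + ((p == (q.1, - q.2)%R) && ~~ odd_uncolored p).
Proof.
have opp_eq : ((p.1, - p.2)%R == q) = (p == (q.1, - q.2)%R).
  by case: p q => [k J] [l K]; rewrite !xpair_eqE /= eqr_oppLR.
rewrite /cycle_block /abs_square_of_cycle; have [p_ou | p_nou] := boolP (odd_uncolored p).
  case/andP: (p_ou) => /eqP p2_0 p1_odd.
  by rewrite p1_odd /= -p2_0 -surjective_pairing andbF !addn0.
by rewrite /= odd_double doubleK -surjective_pairing /= opp_eq andbT addn0.
Qed.

Lemma block_mult_notin X q : q \notin X -> block_mult X q = 0.
Proof. by move/count_memPn => X_q; rewrite /block_mult X_q; do !case: ifP. Qed.

Lemma count_blocks_mult X q :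
  count_mem q (flatten (map abs_square_of_cycle (blocks X))) =
  block_mult X q + ~~ odd_uncolored (q.1, - q.2)%R * block_mult X (q.1, - q.2)%R.
Proof.
rewrite count_flatten sumnE !big_map big_flatten /= big_map.
under eq_bigr => p _ do
  rewrite big_nseq iter_addn_0 count_abs_square_of_block mulnDl -mulnb -mulnA.
rewrite big_split /= !sum_pick_uniq ?undup_uniq // !mem_undup.
have in_mult p : (p \in X) * block_mult X p = block_mult X p.
  by have [//|/block_mult_notin->] := boolP (p \in X); rewrite ?mul1n ?muln0.
by rewrite in_mult mulnCA in_mult.
Qed.

Lemma count_blocks X q : abs_square_type X ->
  count_mem q (flatten (map abs_square_of_cycle (blocks X))) = count_mem q X.
Proof.
case: q => k J [X_opp X_odd]; rewrite count_blocks_mult /block_mult /odd_uncolored /= opprK.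
have [J_opp | J_nopp] := eqVneq J (- J)%R.
  rewrite -J_opp; case: ifP => [_ | J_nou]; first by rewrite mul0n addn0.
  by rewrite mul1n addnn even_halfK // X_odd // -negb_and J_nou.
have -> : (- J == 0)%R = false.
  by rewrite oppr_eq0; apply: contraNF J_nopp => /eqP->; rewrite oppr0.
rewrite -X_opp mul1n; case: ltngtP => [_|_|/val_inj/enum_rank_inj J_opp].
- exact: addn0.
- exact: add0n.
- by rewrite -J_opp eqxx in J_nopp.
Qed.

Lemma blocks_pos X : all (fun q => 0 < q.1) X -> all (fun q => 0 < q.1) (blocks X).
Proof.
move=> /allP X_pos; apply/allP => p /flatten_mapP[q q_X].
rewrite mem_nseq => /andP[_ /eqP->].
have q_pos : 0 < q.1 by apply: X_pos; rewrite -mem_undup.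
by rewrite /cycle_block; case: ifP; rewrite //= double_gt0.
Qed.

Lemma sumn_blocks X : abs_square_type X -> sumn (map fst (blocks X)) = sumn (map fst X).
Proof.
move=> X_type; have := perm_count_mem (fun q => count_blocks q X_type).
move/(perm_map fst)/perm_sumn <-; rewrite [in RHS]map_flatten sumn_flatten -!map_comp.
by congr sumn; apply: eq_map => p /=; rewrite sumn_abs_square_of_cycle.
Qed.

End Blocks.

Theorem abs_square_type_realizable (V : finZmodType) n (X : seq (nat * V)) :
  abs_square_type X -> all (fun q => 0 < q.1) X -> sumn (map fst X) = n ->
  exists (z : {ffun 'I_n -> V}) (s : {perm 'I_n}), perm_eq (abs_square_cycles z s) X.
Proof.
move=> X_type X_pos X_sum.
have B_pos := blocks_pos X_pos.
have B_sum : sumn (map fst (blocks X)) = n by rewrite sumn_blocks.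
exists (block_colors n (blocks X)), (block_perm B_sum).
apply: perm_trans (block_realization B_pos B_sum) _.
exact: perm_count_mem (fun q => count_blocks q X_type).
Qed.

Lemma sorted_geq_count_eq (s1 s2 : seq nat) : sorted geq s1 -> sorted geq s2 ->
  (forall k, count_mem k s1 = count_mem k s2) -> s1 = s2.
Proof.
move=> sorted1 sorted2 /perm_count_mem.
exact: (sorted_eq (@ge_trans _ nat) (@ge_anti _ nat)).
Qed.

Section ColoredParts.
Variables (r : nat) (lam : seq (seq nat)).
Local Notation l J := (nth [::] lam J).

Definition colored_parts : seq (nat * 'I_r.+1) :=
  [seq (k, J) | J <- enum 'I_r.+1, k <- l (J : 'I_r.+1)].

Lemma count_colored_parts k (J : 'I_r.+1) :
  count_mem (k, J) colored_parts = count_mem k (l J).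
Proof.
rewrite /colored_parts count_flatten sumnE 2!big_map (bigD1_seq J) ?mem_enum ?enum_uniq //.
rewrite big1_seq => [|J' /andP[J'_J _]].
  by rewrite /= addn0 count_map; apply: eq_count => k'; rewrite /= xpair_eqE eqxx andbT.
by apply/count_memPn/mapP => -[k' _ [_ J_J']]; rewrite J_J' eqxx in J'_J.
Qed.

Lemma colored_parts_pos : all is_partition lam -> all (fun q => 0 < q.1) colored_parts.
Proof.
move=> /allP lam_parts; apply/allP => _ /flatten_mapP[J _ /mapP[k k_J ->]] /=.
have /lam_parts/andP[_ /allP] : l J \in lam.
  by apply: mem_nth; rewrite ltnNge; apply: contraL k_J => /(nth_default [::]) ->.
exact.
Qed.

Lemma sumn_colored_parts : size lam = r.+1 ->
  sumn (map fst colored_parts) = sumn (map sumn lam).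
Proof.
move=> size_lam; rewrite /colored_parts map_flatten sumn_flatten -2!map_comp.
rewrite sumnE big_map big_enum /=.
rewrite [RHS]sumnE big_map (big_nth [::]) size_lam big_mkord.
by apply: eq_bigr => J _; rewrite /= -map_comp map_id.
Qed.

End ColoredParts.

Section CycleType.
Variables (r n : nat) (pi : Grn r.+1 n).
Local Notation ct := (cycle_type (gmul pi (gbar pi))).

Lemma cycle_color_abs_square C :
  cycle_color (gmul pi (gbar pi)) C = abs_square_color pi.1 pi.2 C.
Proof.
rewrite /cycle_color /abs_square_color; congr nat_of_ord.
by apply: eq_bigr => i _; rewrite !ffunE.
Qed.

Lemma count_cycle_type k (J : 'I_r.+1) :
  count_mem k (nth [::] ct J) = count_mem (k, J) (abs_square_cycles pi.1 pi.2).
Proof.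
rewrite /cycle_type (nth_map 0) ?size_iota // nth_iota // add0n count_sort.
rewrite count_map count_filter count_map; apply: eq_count => C /=.
by rewrite cycle_color_abs_square xpair_eqE andbC.
Qed.

Lemma cycle_type_abs_squareE (lam : seq (seq nat)) :
  size lam = r.+1 -> all (sorted geq) lam ->
  ct = lam <-> perm_eq (abs_square_cycles pi.1 pi.2) (colored_parts r lam).
Proof.
move=> size_lam /all_nthP sorted_lam; split=> [<- | /seq.permP ct_lam].
  by apply: perm_count_mem => -[k J]; rewrite count_colored_parts count_cycle_type.
have size_ct : size ct = r.+1 by rewrite size_map size_iota.
apply: (@eq_from_nth _ [::]) => [|j]; rewrite size_ct // => lt_j.
apply: sorted_geq_count_eq => [||k]; last 1 first.
- by rewrite (count_cycle_type k (Ordinal lt_j)) ct_lam count_colored_parts.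
- by rewrite (nth_map 0) ?size_iota //; apply: sort_sorted; apply: (@ge_total _ nat).
- by apply: sorted_lam; rewrite size_lam.
Qed.

End CycleType.

Lemma val_opp_ord r (J : 'I_r.+1) : J != 0%R -> val (- J)%R = r.+1 - J.
Proof.
by move=> J_neq0; rewrite /= modn_small //; move: J_neq0 (ltn_ord J); rewrite -val_eqE /=; lia.
Qed.

Lemma eq_opp_ord r (J : 'I_r.+1) : (J == - J)%R = (J == 0%R) || ((J : nat).*2 == r.+1).
Proof.
have [-> | J_neq0] := eqVneq J 0%R; first by rewrite oppr0 eqxx.
by rewrite -val_eqE val_opp_ord //=; move: J_neq0 (ltn_ord J); rewrite -val_eqE /=; lia.
Qed.

Section Conditions.
Variables (r : nat) (lam : seq (seq nat)).
Hypotheses (size_lam : size lam = r.+1) (sorted_lam : all (sorted geq) lam).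
Local Notation l J := (nth [::] lam J).

Lemma colored_parts_opp :
  (forall k J,
     count_mem (k, J) (colored_parts r lam) = count_mem (k, - J)%R (colored_parts r lam)) <->
  (forall t, 1 <= t -> t.*2 < r.+1 -> l t = l (r.+1 - t)).
Proof.
have sorted_l j : sorted geq (l j).
  have [lt_j | ge_j] := ltnP j r.+1.
    by apply: (all_nthP [::] sorted_lam); rewrite size_lam.
  by rewrite nth_default ?size_lam.
split=> [opp_l t t_pos t_lt | sym_l k J].
  have t_r : t < r.+1 by lia.
  apply: sorted_geq_count_eq => // k; have := opp_l k (Ordinal t_r).
  by rewrite !count_colored_parts val_opp_ord // -val_eqE /= -lt0n.
rewrite !count_colored_parts; have [-> | J_neq0] := eqVneq J 0%R; first by rewrite oppr0.
have J_pos : 0 < J by rewrite lt0n -val_eqE in J_neq0 *.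
have J_r := ltn_ord J.
rewrite val_opp_ord //; case: (ltngtP (J : nat).*2 r.+1) => [J_lt | J_gt | J_half].
- by rewrite sym_l.
- by rewrite (sym_l (r.+1 - J)); [congr (count_mem k (l _)) | |]; lia.
- by congr (count_mem k (l _)); lia.
Qed.

Lemma colored_parts_odd :
  (forall k J, J = (- J)%R -> (J != 0%R) || ~~ odd k ->
     ~~ odd (count_mem (k, J) (colored_parts r lam))) <->
  (forall k, ~~ odd k -> ~~ odd (count_mem k (l 0))) /\
  (~~ odd r.+1 -> forall k, ~~ odd (count_mem k (l r.+1./2))).
Proof.
split=> [odd_l | [even_l0 even_lhalf] k J /eqP].
  split=> [k k_even | r_even k].
    by have := odd_l k 0%R (esym (oppr0 _)); rewrite count_colored_parts eqxx k_even; apply.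
  have half_r : r.+1./2 < r.+1 by rewrite ltn_half_double -addnn; lia.
  have half_eq : (Ordinal half_r : nat).*2 = r.+1 := even_halfK r_even.
  have := odd_l k (Ordinal half_r); rewrite count_colored_parts; apply.
    by apply/eqP; rewrite eq_opp_ord half_eq eqxx orbT.
  by rewrite -val_eqE; move: half_eq => /=; lia.
rewrite eq_opp_ord count_colored_parts => /orP[/eqP-> | /eqP J_half _].
  by rewrite eqxx; apply: even_l0.
have -> : (J : nat) = r.+1./2 by rewrite -[in RHS]J_half doubleK.
by apply: even_lhalf; rewrite -J_half odd_double.
Qed.

Lemma colored_parts_typeE :
  abs_square_type (colored_parts r lam) <->
  [/\ (forall k, ~~ odd k -> ~~ odd (count_mem k (l 0))),
      (forall t, 1 <= t -> t.*2 < r.+1 -> l t = l (r.+1 - t)) &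
      (~~ odd r.+1 -> forall k, ~~ odd (count_mem k (l r.+1./2)))].
Proof.
split=> [[/colored_parts_opp sym_l /colored_parts_odd[even_l0 even_lhalf]] | ].
  by split.
case=> even_l0 sym_l even_lhalf.
by split; [apply/colored_parts_opp | apply/colored_parts_odd].
Qed.

End Conditions.

Theorem proposition6p11 (r n : nat) (lam : seq (seq nat)) :
  (0 < r)%N -> rpartition r n lam ->
  ((exists pi : Grn r n, cycle_type (gmul pi (gbar pi)) = lam) <->
   [/\ (forall k : nat, ~~ odd k -> ~~ odd (count_mem k (nth [::] lam 0))),
       (forall t : nat, (1 <= t)%N -> (t.*2 < r)%N ->
          nth [::] lam t = nth [::] lam (r - t)) &
       (~~ odd r -> forall k : nat, ~~ odd (count_mem k (nth [::] lam r./2)))]).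
Proof.
case: r => // r _ /and3P[/eqP size_lam lam_parts /eqP sum_lam].
have sorted_lam : all (sorted geq) lam by apply: sub_all lam_parts => l /andP[].
rewrite -colored_parts_typeE //; split=> [[pi /cycle_type_abs_squareE ct_lam] | lam_type].
  by apply: perm_abs_square_type (abs_square_cycles_type pi.1 pi.2); apply: ct_lam.
have [z [s zs]] := abs_square_type_realizable lam_type (colored_parts_pos r lam_parts)
  (etrans (sumn_colored_parts size_lam) sum_lam).
by exists (z, s); apply/cycle_type_abs_squareE.
Qed.
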